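(* Let $N=\{1,\dots,n\}$, $n\ge2$, be a parallel-link network with unit demand and affine latencies $\ell_i(x_i)=a_ix_i+b_i$, $a_i>0$, $b_i\ge 0$, with $x_i(0)>0$ for all $i\in N$. Then for every $c\in\mathbb{R}_+$ there is at most one pair $(t,x)$ satisfying: there is $K$ with $a_ix_i+b_i+t_i=K$ for all $i$, $\sum_ix_i=1$, $t_i=\min\{(a_i+1/\sum_{j\ne i}1/a_j)x_i,\,c\}$ for all $i$, and $x_i>0$ for all $i$. Consequently the $c$-capped subgame perfect Nash equilibrium is unique, i.e. $|\mathcal{T}(c)|=1$.
   Context: Parallel links $N$, one unit of flow; flows $x\in\mathbb{R}^N_+$ with $\sum_ix_i=1$. For tolls $t\in\mathbb{R}^N_+$, $x(t)$ is the unique Wardrop equilibrium for $t$ (for all $i,j$ with $x_i>0$: $\ell_i(x_i)+t_i\le\ell_j(x_j)+t_j$); $x(0)$ is the untolled one. Profit $\Pi_i(t)=t_ix_i(t)$. $\mathcal{T}(c)$: toll vectors $t$ with $0\le t_i\le c$ for all $i$ such that for every $i$ and $t'_i\in[0,c]$, $\Pi_i(t_i,t_{-i})\ge \Pi_i(t'_i,t_{-i})$ (flow recomputed). *)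

(* real numbers. Links are indexed 0..n-1; vectors are nat -> R
   (entries at indices >= n are irrelevant). *)
From Stdlib Require Import Reals Lra Lia Arith.
Open Scope R_scope.

Fixpoint rsum (n : nat) (f : nat -> R) : R :=
  match n with
  | O => 0
  | S m => rsum m f + f m
  end.

Definition lat (a b : nat -> R) (i : nat) (y : R) : R := a i * y + b i.

Definition wardrop (n : nat) (a b t x : nat -> R) : Prop :=
  (forall i, (i < n)%nat -> 0 <= x i) /\
  rsum n x = 1 /\
  (forall i j, (i < n)%nat -> (j < n)%nat -> 0 < x i ->
      lat a b i (x i) + t i <= lat a b j (x j) + t j).

Definition upd (t : nat -> R) (i : nat) (s : R) : nat -> R :=
  fun j => if Nat.eqb j i then s else t j.

(* t is in T(c): feasible caps and no profitable unilateral deviation in [0,c],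
   where flows are the (unique) Wardrop equilibria of the respective tolls. *)
Definition inT (n : nat) (a b : nat -> R) (c : R) (t : nat -> R) : Prop :=
  (forall i, (i < n)%nat -> 0 <= t i <= c) /\
  (forall i, (i < n)%nat -> forall s, 0 <= s <= c ->
     forall x x', wardrop n a b t x -> wardrop n a b (upd t i s) x' ->
       t i * x i >= s * x' i).

Definition sum_inv_others (n : nat) (a : nat -> R) (i : nat) : R :=
  rsum n (fun j => if Nat.eqb j i then 0 else / a j).

Definition capped_system (n : nat) (a b : nat -> R) (c : R) (t x : nat -> R) : Prop :=
  (exists K, forall i, (i < n)%nat -> a i * x i + b i + t i = K) /\
  rsum n x = 1 /\
  (forall i, (i < n)%nat ->
     t i = Rmin ((a i + / sum_inv_others n a i) * x i) c) /\
  (forall i, (i < n)%nat -> 0 < x i).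

From Stdlib Require Import Reals Lra Lia.
Open Scope R_scope.

(* Write [h_i x = a_i x + min (alpha_i x) c] with [alpha_i = a_i + 1 / sum_{j <> i} 1/a_j].
   The capped system says that [h_i x_i + b_i] is the same for all links; each [h_i] is
   strictly increasing, so the unit demand pins down the common level and hence the flows.

   Raising the toll of link [i] by [alpha_i d] at an equilibrium with all flows positive
   moves the equilibrium linearly: link [i] loses [d], the others gain [d / (S_i a_j)].
   Hence the profit of link [i] is locally a concave quadratic in its own toll with peak
   [alpha_i x_i], and a best response under the cap is [min (alpha_i x_i) c]. Conversely
   this toll is a global best response, because after any deviation to [s] the new flow
   [x'_i] satisfies [alpha_i (x_i - x'_i) >= s - t_i]. At a point of [T(c)] no flow
   vanishes (an empty link would profit from a small toll, the untolled flows being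
   positive), so [T(c)] is exactly the set of tolls of the capped system, which has a
   solution by the intermediate value theorem. *)

Lemma rsum_ext n f g : (forall j, (j < n)%nat -> f j = g j) -> rsum n f = rsum n g.
Proof.
  induction n as [|n IH]; intros E; simpl; [reflexivity|].
  rewrite (IH (fun j Hj => E j ltac:(lia))), (E n ltac:(lia)); reflexivity.
Qed.

Lemma rsum_zero n : rsum n (fun _ => 0) = 0.
Proof. induction n as [|n IH]; simpl; [|rewrite IH]; lra. Qed.

Lemma rsum_plus n f g : rsum n (fun j => f j + g j) = rsum n f + rsum n g.
Proof. induction n as [|n IH]; simpl; [|rewrite IH]; lra. Qed.

Lemma rsum_minus n f g : rsum n (fun j => f j - g j) = rsum n f - rsum n g.
Proof. induction n as [|n IH]; simpl; [|rewrite IH]; lra. Qed.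

Lemma rsum_scal n k f : rsum n (fun j => k * f j) = k * rsum n f.
Proof. induction n as [|n IH]; simpl; [|rewrite IH]; lra. Qed.

Lemma rsum_le n f g : (forall j, (j < n)%nat -> f j <= g j) -> rsum n f <= rsum n g.
Proof.
  induction n as [|n IH]; intros H; simpl; [lra|].
  pose proof (IH (fun j Hj => H j ltac:(lia))); pose proof (H n ltac:(lia)); lra.
Qed.

Lemma rsum_lt n f g i : (i < n)%nat -> (forall j, (j < n)%nat -> f j <= g j) ->
  f i < g i -> rsum n f < rsum n g.
Proof.
  induction n as [|n IH]; intros Hi H Hlt; simpl; [lia|].
  pose proof (H n ltac:(lia)).
  destruct (Nat.eq_dec i n) as [->|Hne].
  - pose proof (rsum_le n f g (fun j Hj => H j ltac:(lia))); lra.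
  - pose proof (IH ltac:(lia) (fun j Hj => H j ltac:(lia)) Hlt); lra.
Qed.

Lemma eq_of_rsum_eq_of_comparable n f g : rsum n f = rsum n g ->
  (forall j, (j < n)%nat -> f j <= g j) \/ (forall j, (j < n)%nat -> g j <= f j) ->
  forall j, (j < n)%nat -> f j = g j.
Proof.
  intros E [H|H] j Hj; destruct (Rle_lt_or_eq_dec _ _ (H j Hj)) as [Hlt|Heq].
  - pose proof (rsum_lt n f g j Hj H Hlt); lra.
  - exact Heq.
  - pose proof (rsum_lt n g f j Hj H Hlt); lra.
  - symmetry; exact Heq.
Qed.

Lemma exists_pos_of_rsum_pos n f : 0 < rsum n f -> exists i, (i < n)%nat /\ 0 < f i.
Proof.
  induction n as [|n IH]; simpl; intros H; [lra|].
  destruct (Rlt_le_dec 0 (f n)) as [Hfn|Hfn]; [exists n; split; [lia|exact Hfn]|].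
  destruct (IH ltac:(lra)) as [i [Hi Hfi]]; exists i; split; [lia|exact Hfi].
Qed.

Lemma exists_argmin n f : (0 < n)%nat ->
  exists i, (i < n)%nat /\ forall j, (j < n)%nat -> f i <= f j.
Proof.
  induction n as [|n IH]; intros Hn; [lia|].
  destruct (Nat.eq_dec n 0) as [->|Hn0].
  { exists 0%nat; split; [lia|]; intros j Hj; replace j with 0%nat by lia; lra. }
  destruct (IH ltac:(lia)) as [i [Hi Hmin]].
  destruct (Rle_lt_dec (f i) (f n)) as [Hin|Hni].
  - exists i; split; [lia|]; intros j Hj.
    destruct (Nat.eq_dec j n) as [->|]; [exact Hin|apply Hmin; lia].
  - exists n; split; [lia|]; intros j Hj.
    destruct (Nat.eq_dec j n) as [->|]; [lra|]; pose proof (Hmin j ltac:(lia)); lra.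
Qed.

Definition except (i : nat) (f : nat -> R) (j : nat) : R := if Nat.eqb j i then 0 else f j.

Lemma rsum_split n f i : (i < n)%nat -> rsum n f = f i + rsum n (except i f).
Proof.
  induction n as [|n IH]; intros Hi; [lia|]; simpl.
  destruct (Nat.eq_dec i n) as [->|Hne].
  - rewrite (rsum_ext n (except n f) f).
    + unfold except; rewrite Nat.eqb_refl; lra.
    + intros j Hj; unfold except; destruct (Nat.eqb_spec j n); [lia|reflexivity].
  - rewrite (IH ltac:(lia)).
    replace (except i f n) with (f n)
      by (unfold except; destruct (Nat.eqb_spec n i); [lia|reflexivity]); lra.
Qed.

Lemma rsum_except_scal n i k f :
  rsum n (except i (fun j => k * f j)) = k * rsum n (except i f).
Proof.
  rewrite <- rsum_scal; apply rsum_ext; intros j _; unfold except.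
  destruct (Nat.eqb j i); ring.
Qed.

Lemma rsum_ge_term n f i : (i < n)%nat -> (forall j, (j < n)%nat -> 0 <= f j) ->
  f i <= rsum n f.
Proof.
  intros Hi H; rewrite (rsum_split n f i Hi).
  assert (rsum n (fun _ => 0) <= rsum n (except i f)).
  { apply rsum_le; intros j Hj; unfold except; destruct (Nat.eqb j i); [lra|auto]. }
  rewrite rsum_zero in *; lra.
Qed.

Lemma upd_same t i s : upd t i s i = s.
Proof. unfold upd; rewrite Nat.eqb_refl; reflexivity. Qed.

Lemma upd_other t i s j : j <> i -> upd t i s j = t j.
Proof. intros Hne; unfold upd; destruct (Nat.eqb_spec j i); [contradiction|reflexivity]. Qed.

Lemma continuity_ext f g : (forall x, f x = g x) -> continuity f -> continuity g.
Proof.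
  intros E Hf x; apply (continuity_pt_locally_ext f g 1 x); [lra|intros; apply E|apply Hf].
Qed.

Lemma continuity_Rmax f g : continuity f -> continuity g ->
  continuity (fun x => Rmax (f x) (g x)).
Proof.
  intros Hf Hg.
  apply (continuity_ext
    (mult_real_fct (/ 2) (plus_fct (plus_fct f g) (comp Rabs (minus_fct f g))))).
  - intros x; unfold mult_real_fct, plus_fct, comp, minus_fct, Rmax, Rabs.
    destruct Rle_dec; destruct Rcase_abs; lra.
  - apply continuity_scal, continuity_plus; [apply continuity_plus; assumption|].
    apply continuity_comp; [apply continuity_minus; assumption|apply Rcontinuity_abs].
Qed.

Lemma continuity_rsum n (F : nat -> R -> R) : (forall j, continuity (F j)) ->
  continuity (fun x => rsum n (fun j => F j x)).
Proof.
  intros H; induction n as [|n IH]; simpl.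
  - apply continuity_const; intros x y; reflexivity.
  - apply (continuity_plus (fun x => rsum n (fun j => F j x)) (F n)); auto.
Qed.

Lemma rsum_level_exists n (F : nat -> R -> R) L H : (forall j, continuity (F j)) ->
  L <= H -> rsum n (fun j => F j L) <= 1 -> 1 <= rsum n (fun j => F j H) ->
  exists K, L <= K <= H /\ rsum n (fun j => F j K) = 1.
Proof.
  intros HF HLH HL HH.
  assert (Hc : continuity (fun x => rsum n (fun j => F j x) - 1)).
  { apply (continuity_minus _ (fun _ => 1)); [apply continuity_rsum; exact HF|].
    apply continuity_const; intros x y; reflexivity. }
  destruct (IVT_cor _ L H Hc HLH) as [K [HK HK1]]; [nra|].
  exists K; split; [exact HK|lra].
Qed.

Section Wardrop.

Variables (n : nat) (a b : nat -> R).
Hypothesis Ha : forall j, (j < n)%nat -> 0 < a j.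

Definition equal_costs (t x : nat -> R) (K : R) : Prop :=
  forall j, (j < n)%nat -> a j * x j + b j + t j = K.

Definition cost_level (t x : nat -> R) (K : R) (j : nat) : Prop :=
  (0 < x j /\ a j * x j + b j + t j = K) \/ (x j = 0 /\ K <= b j + t j).

Lemma wardrop_cost_level t x : wardrop n a b t x ->
  exists K, forall j, (j < n)%nat -> cost_level t x K j.
Proof.
  intros [Hnn [Hsum Hw]].
  destruct (exists_pos_of_rsum_pos n x ltac:(lra)) as [i [Hi Hxi]].
  exists (a i * x i + b i + t i); intros j Hj; unfold cost_level.
  pose proof (Hw i j Hi Hj Hxi); unfold lat in *.
  destruct (Rle_lt_or_eq_dec 0 (x j) (Hnn j Hj)) as [Hxj|Hxj].
  - left; split; [exact Hxj|]; pose proof (Hw j i Hj Hi Hxj); lra.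
  - right; rewrite <- Hxj in *; split; [reflexivity|lra].
Qed.

Lemma cost_level_flow_le t t' x y K K' j : (j < n)%nat -> K - t j <= K' - t' j ->
  cost_level t x K j -> cost_level t' y K' j -> x j <= y j.
Proof.
  intros Hj HK Hx Hy; pose proof (Ha j Hj).
  destruct Hx as [[Hx Ex]|[Hx Ex]]; destruct Hy as [[Hy Ey]|[Hy Ey]]; nra.
Qed.

Lemma wardrop_unique t x y : wardrop n a b t x -> wardrop n a b t y ->
  forall j, (j < n)%nat -> x j = y j.
Proof.
  intros Wx Wy.
  destruct (wardrop_cost_level t x Wx) as [K HK].
  destruct (wardrop_cost_level t y Wy) as [K' HK'].
  apply eq_of_rsum_eq_of_comparable; [destruct Wx as [_ [-> _]], Wy as [_ [-> _]]; reflexivity|].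
  destruct (Rle_or_lt K K'); [left|right]; intros j Hj;
    eapply cost_level_flow_le; eauto; lra.
Qed.

Lemma wardrop_of_equal_costs t x K : (forall j, (j < n)%nat -> 0 <= x j) ->
  rsum n x = 1 -> equal_costs t x K -> wardrop n a b t x.
Proof.
  intros Hnn Hsum HK; split; [exact Hnn|split; [exact Hsum|]].
  intros i j Hi Hj _; unfold lat; rewrite (HK i Hi), (HK j Hj); lra.
Qed.

Lemma equal_costs_of_wardrop t x : wardrop n a b t x ->
  (forall j, (j < n)%nat -> 0 < x j) -> exists K, equal_costs t x K.
Proof.
  intros W Hpos; destruct (wardrop_cost_level t x W) as [K HK]; exists K.
  intros j Hj; destruct (HK j Hj) as [[_ E]|[E _]]; [exact E|].
  pose proof (Hpos j Hj); lra.
Qed.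

Lemma wardrop_tolls_ext t t' x : (forall j, (j < n)%nat -> t j = t' j) ->
  wardrop n a b t x -> wardrop n a b t' x.
Proof.
  intros E [Hnn [Hsum Hw]]; split; [exact Hnn|split; [exact Hsum|]].
  intros i j Hi Hj Hxi; rewrite <- (E i Hi), <- (E j Hj); auto.
Qed.

Lemma wardrop_exists t : (0 < n)%nat -> exists x, wardrop n a b t x.
Proof.
  intros Hn.
  set (F := fun j K => Rmax 0 ((K - b j - t j) / a j)).
  destruct (exists_argmin n (fun j => b j + t j) Hn) as [i [Hi Hmin]].
  pose proof (Ha i Hi) as Hai.
  destruct (rsum_level_exists n F (b i + t i) (b i + t i + a i)) as [K [_ HK]].
  - intros j; apply (continuity_Rmax (fun _ => 0)); [|reg].
    apply continuity_const; intros u v; reflexivity.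
  - lra.
  - apply (Rle_trans _ (rsum n (fun _ => 0))); [|rewrite rsum_zero; lra].
    apply rsum_le; intros j Hj; unfold F.
    rewrite Rmax_left; [lra|]; pose proof (Hmin j Hj); pose proof (Ha j Hj).
    assert (0 < / a j) by (apply Rinv_0_lt_compat; lra); nra.
  - eapply Rle_trans; [|apply (rsum_ge_term n _ i Hi); intros; apply Rmax_l].
    unfold F; eapply Rle_trans; [|apply Rmax_r]; right; field; lra.
  - exists (fun j => F j K).
    assert (Hcost : forall j, (j < n)%nat ->
      K <= a j * F j K + b j + t j /\ (0 < F j K -> a j * F j K + b j + t j = K)).
    { intros j Hj; pose proof (Ha j Hj); unfold F, Rmax.
      assert (a j * ((K - b j - t j) / a j) = K - b j - t j) by (field; lra).
      destruct Rle_dec; split; intros; nra. }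
    split; [intros; apply Rmax_l|split; [exact HK|]].
    intros j k Hj Hk Hpos; unfold lat.
    pose proof (Hcost j Hj); pose proof (Hcost k Hk); intuition lra.
Qed.

End Wardrop.

Definition capped_cost (a al c x : R) : R := a * x + Rmin (al * x) c.

Definition capped_cost_inv (a al c y : R) : R := Rmax (y / (a + al)) ((y - c) / a).

Lemma capped_cost_le_cancel a al c x y : 0 < a -> 0 < al ->
  capped_cost a al c x <= capped_cost a al c y -> x <= y.
Proof.
  intros Ha Hal H; destruct (Rle_or_lt x y) as [|Hlt]; [assumption|exfalso].
  unfold capped_cost, Rmin in H; repeat destruct Rle_dec; nra.
Qed.

Lemma capped_cost_inv_spec a al c y : 0 < a -> 0 < al ->
  capped_cost a al c (capped_cost_inv a al c y) = y.
Proof.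
  intros Ha Hal; unfold capped_cost, capped_cost_inv.
  assert (Ew : y = (a + al) * (y / (a + al))) by (field; lra).
  assert (Ez : y - c = a * ((y - c) / a)) by (field; lra).
  set (w := y / (a + al)) in *; set (z := (y - c) / a) in *.
  unfold Rmax, Rmin; destruct Rle_dec as [H1|H1]; destruct Rle_dec as [H2|H2]; try lra.
  - assert ((a + al) * w <= (a + al) * z) by (apply Rmult_le_compat_l; lra); nra.
  - assert (a * z < a * w) by (apply Rmult_lt_compat_l; lra); nra.
Qed.

Lemma capped_cost_inv_le a al c x y : 0 < a -> 0 < al ->
  y <= capped_cost a al c x -> capped_cost_inv a al c y <= x.
Proof.
  intros Ha Hal H; apply (capped_cost_le_cancel a al c); [assumption|assumption|].
  rewrite capped_cost_inv_spec; assumption.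
Qed.

Lemma capped_profit_ge al x x' s c : 0 < al -> 0 < x -> 0 <= s <= c ->
  s - Rmin (al * x) c <= al * (x - x') -> Rmin (al * x) c * x >= s * x'.
Proof.
  intros Hal Hx Hs H; apply Rle_ge, (Rmult_le_reg_l al); [exact Hal|].
  unfold Rmin in *; destruct Rle_dec as [Hle|Hle].
  - (* [al (al x^2 - s x') >= (al x - s)^2] *)
    assert (s * (s - al * x) <= s * (al * (x - x'))) by (apply Rmult_le_compat_l; lra).
    pose proof (Rle_0_sqr (al * x - s)); unfold Rsqr in *.
    lra.
  - assert (s * (s - c) <= s * (al * (x - x'))) by (apply Rmult_le_compat_l; lra).
    assert (0 <= (c - s) * (al * x - s)) by (apply Rmult_le_pos; lra).
    lra.
Qed.

(* [h (p - t - h) / alpha] is the profit gain [(t + h) (x - h / alpha) - t x] of the toll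
   change [h], where [p = alpha x]. *)
Lemma capped_of_local_optimality p t c m : 0 < p -> 0 < m -> 0 <= t <= c ->
  (forall h, Rabs h <= m -> 0 <= t + h <= c -> h * (p - t - h) <= 0) -> t = Rmin p c.
Proof.
  intros Hp Hm [Ht0 Htc] Hloc.
  assert (Hle : t <= p).
  { destruct (Rle_or_lt t p) as [|Hlt]; [assumption|exfalso].
    set (e := Rmin m ((t - p) / 2)).
    assert (e <= m) by apply Rmin_l; assert (e <= (t - p) / 2) by apply Rmin_r.
    assert (0 < e) by (apply Rmin_glb_lt; lra).
    assert (Rabs (- e) <= m) by (rewrite Rabs_Ropp, Rabs_pos_eq; lra).
    pose proof (Hloc (- e) ltac:(assumption) ltac:(lra)); nra. }
  assert (Hcap : p <= t \/ t = c).
  { destruct (Rle_or_lt p t) as [|Hlt]; [left; assumption|right].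
    destruct (Rle_lt_or_eq_dec t c Htc) as [Htc'|]; [exfalso|assumption].
    set (e := Rmin m (Rmin (c - t) ((p - t) / 2))).
    assert (e <= m) by apply Rmin_l.
    assert (e <= c - t) by (eapply Rle_trans; [apply Rmin_r|apply Rmin_l]).
    assert (e <= (p - t) / 2) by (eapply Rle_trans; [apply Rmin_r|apply Rmin_r]).
    assert (0 < e) by (apply Rmin_glb_lt; [lra|apply Rmin_glb_lt; lra]).
    assert (Rabs e <= m) by (rewrite Rabs_pos_eq; lra).
    pose proof (Hloc e ltac:(assumption) ltac:(lra)); nra. }
  unfold Rmin; destruct Rle_dec; lra.
Qed.

Definition toll_slope (n : nat) (a : nat -> R) (i : nat) : R := a i + / sum_inv_others n a i.

Section CappedTolls.

Variables (n : nat) (a b : nat -> R) (c : R).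
Hypothesis Hn : (2 <= n)%nat.
Hypothesis Ha : forall j, (j < n)%nat -> 0 < a j.

Lemma sum_inv_others_pos i : (i < n)%nat -> 0 < sum_inv_others n a i.
Proof.
  intros Hi; set (j := if Nat.eqb i 0 then 1%nat else 0%nat).
  assert (Hj : (j < n)%nat /\ j <> i) by (unfold j; destruct (Nat.eqb_spec i 0); lia).
  unfold sum_inv_others; rewrite <- (rsum_zero n) at 1.
  apply (rsum_lt _ _ _ j); [apply Hj| |].
  - intros k Hk; destruct (Nat.eqb k i); [lra|left; apply Rinv_0_lt_compat, Ha, Hk].
  - destruct (Nat.eqb_spec j i); [lia|apply Rinv_0_lt_compat, Ha, Hj].
Qed.

Lemma toll_slope_gt i : (i < n)%nat -> a i < toll_slope n a i.
Proof.
  intros Hi; pose proof (Rinv_0_lt_compat _ (sum_inv_others_pos i Hi)).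
  unfold toll_slope; lra.
Qed.

Lemma capped_system_unique t x t' x' :
  capped_system n a b c t x -> capped_system n a b c t' x' ->
  forall i, (i < n)%nat -> t i = t' i /\ x i = x' i.
Proof.
  assert (Hcost : forall t x, capped_system n a b c t x -> exists K, forall i, (i < n)%nat ->
            capped_cost (a i) (toll_slope n a i) c (x i) + b i = K).
  { intros t0 x0 [[K HK] [_ [Ht _]]]; exists K; intros i Hi.
    unfold capped_cost, toll_slope; rewrite <- Ht by exact Hi; rewrite <- (HK i Hi); ring. }
  assert (Hmono : forall x x' K K', K <= K' ->
            (forall i, (i < n)%nat -> capped_cost (a i) (toll_slope n a i) c (x i) + b i = K) ->
            (forall i, (i < n)%nat -> capped_cost (a i) (toll_slope n a i) c (x' i) + b i = K') ->
            forall i, (i < n)%nat -> x i <= x' i).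
  { intros y y' K K' HKK' Hy Hy' i Hi; pose proof (Hy i Hi); pose proof (Hy' i Hi).
    pose proof (toll_slope_gt i Hi); pose proof (Ha i Hi).
    apply (capped_cost_le_cancel (a i) (toll_slope n a i) c); lra. }
  intros C C'.
  destruct (Hcost t x C) as [K HK], (Hcost t' x' C') as [K' HK'].
  assert (Hx : forall i, (i < n)%nat -> x i = x' i).
  { apply eq_of_rsum_eq_of_comparable; [destruct C as [_ [-> _]], C' as [_ [-> _]]; reflexivity|].
    destruct (Rle_or_lt K K'); [left|right]; eapply Hmono; eauto; lra. }
  intros i Hi; split; [|exact (Hx i Hi)].
  destruct C as [_ [_ [Ht _]]], C' as [_ [_ [Ht' _]]].
  rewrite (Ht i Hi), (Ht' i Hi), (Hx i Hi); reflexivity.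
Qed.

Section EqualCostFlow.

Variables (t x : nat -> R) (K : R).
Hypothesis Hxpos : forall j, (j < n)%nat -> 0 < x j.
Hypothesis Hxsum : rsum n x = 1.
Hypothesis HK : equal_costs n a b t x K.

Lemma deviation_flow_bound i s x' : (i < n)%nat -> wardrop n a b (upd t i s) x' ->
  0 < x' i -> s - t i <= toll_slope n a i * (x i - x' i).
Proof.
  intros Hi [_ [Hsum' Hw]] Hpos.
  pose proof (sum_inv_others_pos i Hi) as HS.
  set (K' := a i * x' i + b i + s).
  assert (Hothers : rsum n (except i (fun j => (K' - K) * / a j))
                    <= rsum n (except i (fun j => x' j - x j))).
  { apply rsum_le; intros j Hj; unfold except.
    destruct (Nat.eqb_spec j i) as [->|Hne]; [lra|].
    pose proof (Hw i j Hi Hj Hpos) as Hij; unfold lat in Hij.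
    rewrite upd_same, (upd_other t i s j Hne) in Hij.
    pose proof (HK j Hj); pose proof (Ha j Hj).
    apply (Rmult_le_reg_l (a j)); [assumption|].
    replace (a j * ((K' - K) * / a j)) with (K' - K) by (field; lra); unfold K'; lra. }
  rewrite rsum_except_scal in Hothers.
  pose proof (rsum_split n (fun j => x' j - x j) i Hi) as Hsplit.
  rewrite rsum_minus, Hsum', Hxsum in Hsplit.
  change (rsum n (except i (fun j => / a j))) with (sum_inv_others n a i) in Hothers.
  assert (K' - K <= / sum_inv_others n a i * (x i - x' i)).
  { apply (Rmult_le_reg_l (sum_inv_others n a i)); [assumption|].
    replace (sum_inv_others n a i * (/ sum_inv_others n a i * (x i - x' i)))
      with (x i - x' i) by (field; lra).
    lra. }
  pose proof (HK i Hi); unfold toll_slope, K' in *; lra.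
Qed.

Lemma capped_toll_no_profitable_deviation i s x' : (i < n)%nat ->
  t i = Rmin (toll_slope n a i * x i) c -> 0 <= s <= c ->
  wardrop n a b (upd t i s) x' -> t i * x i >= s * x' i.
Proof.
  intros Hi Ht Hs W.
  pose proof (toll_slope_gt i Hi); pose proof (Ha i Hi); pose proof (Hxpos i Hi).
  destruct (Rle_lt_or_eq_dec 0 (x' i) (proj1 W i Hi)) as [Hpos|Hzero].
  - rewrite Ht; apply capped_profit_ge; [lra|assumption|assumption|].
    rewrite <- Ht; exact (deviation_flow_bound i s x' Hi W Hpos).
  - rewrite <- Hzero, Rmult_0_r.
    assert (0 <= t i) by (rewrite Ht; apply Rmin_glb; [apply Rmult_le_pos|]; lra).
    apply Rle_ge, Rmult_le_pos; lra.
Qed.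

Lemma deviation_wardrop i d : (i < n)%nat ->
  (forall j, (j < n)%nat -> toll_slope n a i * Rabs d <= a j * x j) ->
  wardrop n a b (upd t i (t i + toll_slope n a i * d))
    (fun j => if Nat.eqb j i then x i - d else x j + d / (sum_inv_others n a i * a j)).
Proof.
  intros Hi Hsmall.
  pose proof (sum_inv_others_pos i Hi) as HS; pose proof (Ha i Hi).
  pose proof (toll_slope_gt i Hi); pose proof (Rle_abs d); pose proof (Rle_abs (- d)).
  rewrite Rabs_Ropp in *; pose proof (Rabs_pos d).
  apply (wardrop_of_equal_costs n a b _ _ (K + d / sum_inv_others n a i)).
  - intros j Hj; destruct (Nat.eqb_spec j i) as [->|Hne].
    + pose proof (Hsmall i Hi); nra.
    + pose proof (Hsmall j Hj); pose proof (Ha j Hj).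
      replace (x j + d / (sum_inv_others n a i * a j))
        with ((a j * x j + d * / sum_inv_others n a i) / a j) by (field; lra).
      apply Rle_mult_inv_pos; [|assumption].
      assert (/ sum_inv_others n a i < toll_slope n a i) by (unfold toll_slope; lra).
      pose proof (Rinv_0_lt_compat _ HS); nra.
  - rewrite (rsum_split n _ i Hi), Nat.eqb_refl.
    rewrite (rsum_ext n _ (fun j => except i x j
                                    + except i (fun j => d / sum_inv_others n a i * / a j) j)).
    + rewrite rsum_plus, rsum_except_scal.
      change (rsum n (except i (fun j => / a j))) with (sum_inv_others n a i).
      replace (rsum n (except i x)) with (1 - x i)
        by (pose proof (rsum_split n x i Hi); lra).
      field; lra.
    + intros j Hj; unfold except; destruct (Nat.eqb_spec j i); [ring|].
      pose proof (Ha j Hj); field; lra.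
  - intros j Hj; destruct (Nat.eqb_spec j i) as [->|Hne].
    + rewrite upd_same, <- (HK i Hi); unfold toll_slope, Rdiv; ring.
    + rewrite (upd_other t i _ j Hne), <- (HK j Hj); pose proof (Ha j Hj); field; lra.
Qed.

Lemma best_response_capped_toll i : (i < n)%nat -> 0 <= t i <= c ->
  (forall s, 0 <= s <= c -> forall y, wardrop n a b (upd t i s) y -> t i * x i >= s * y i) ->
  t i = Rmin (toll_slope n a i * x i) c.
Proof.
  intros Hi Ht Hbest.
  destruct (exists_argmin n (fun j => a j * x j) ltac:(lia)) as [k [Hk Hmin]].
  pose proof (toll_slope_gt i Hi); pose proof (Ha i Hi); pose proof (Hxpos i Hi).
  pose proof (Ha k Hk); pose proof (Hxpos k Hk).
  set (al := toll_slope n a i) in *.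
  apply (capped_of_local_optimality _ _ _ (a k * x k)); [nra|nra|exact Ht|].
  intros h Hh Hrange.
  set (d := h / al).
  assert (Hd : al * Rabs d = Rabs h).
  { unfold d, Rdiv; rewrite Rabs_mult, Rabs_inv, (Rabs_pos_eq al) by lra; field; lra. }
  assert (Hsmall : forall j, (j < n)%nat -> al * Rabs d <= a j * x j)
    by (intros j Hj; pose proof (Hmin j Hj); cbv beta in *; lra).
  pose proof (deviation_wardrop i d Hi Hsmall) as W.
  replace (t i + toll_slope n a i * d) with (t i + h) in W by (unfold d; fold al; field; lra).
  pose proof (Hbest (t i + h) Hrange _ W) as Hprofit; cbv beta in Hprofit.
  rewrite Nat.eqb_refl in Hprofit.
  assert (E : al * (t i * x i - (t i + h) * (x i - d)) = - (h * (al * x i - t i - h)))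
    by (unfold d; field; lra).
  assert (0 <= al * (t i * x i - (t i + h) * (x i - d))) by (apply Rmult_le_pos; lra).
  lra.
Qed.

End EqualCostFlow.

Hypothesis Hc : 0 <= c.
Hypothesis Hx0 : forall x0, wardrop n a b (fun _ => 0) x0 -> forall i, (i < n)%nat -> 0 < x0 i.

Lemma untolled_equilibrium : exists x0 K0, rsum n x0 = 1 /\
  (forall j, (j < n)%nat -> 0 < x0 j) /\ equal_costs n a b (fun _ => 0) x0 K0.
Proof.
  destruct (wardrop_exists n a b Ha (fun _ => 0) ltac:(lia)) as [x0 W0].
  destruct (equal_costs_of_wardrop n a b (fun _ => 0) x0 W0 (Hx0 x0 W0)) as [K0 HK0].
  exists x0, K0; split; [apply W0|split; [exact (Hx0 x0 W0)|exact HK0]].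
Qed.

Lemma inT_flow_pos t x : inT n a b c t -> wardrop n a b t x ->
  forall i, (i < n)%nat -> 0 < x i.
Proof.
  intros [Hbounds Hdev] W i Hi.
  destruct (Req_dec c 0) as [Hc0|Hc0].
  { apply (Hx0 x); [|exact Hi]; apply (wardrop_tolls_ext n a b t); [|exact W].
    intros j Hj; pose proof (Hbounds j Hj); lra. }
  destruct (Rle_lt_or_eq_dec 0 (x i) (proj1 W i Hi)) as [|Hxi]; [assumption|exfalso].
  destruct untolled_equilibrium as [x0 [K0 [Hsum0 [Hpos0 HK0]]]].
  pose proof (HK0 i Hi); pose proof (Ha i Hi); pose proof (Hpos0 i Hi).
  (* An empty link [i] would earn [s y_i > 0] with the toll [s] below. *)
  set (s := Rmin c ((K0 - b i) / 2)).
  assert (s <= c) by apply Rmin_l; assert (s <= (K0 - b i) / 2) by apply Rmin_r.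
  assert (0 < s) by (apply Rmin_glb_lt; nra).
  destruct (wardrop_exists n a b Ha (upd t i s) ltac:(lia)) as [y Wy].
  pose proof (Hdev i Hi s ltac:(lra) x y W Wy) as Hprofit; rewrite <- Hxi in Hprofit.
  assert (Hyi : y i = 0) by (pose proof (proj1 Wy i Hi); nra).
  destruct (wardrop_cost_level n a b (upd t i s) y Wy) as [K HK].
  assert (K <= b i + s).
  { destruct (HK i Hi) as [[Hp _]|[_ E]]; [lra|rewrite upd_same in E; exact E]. }
  assert (K0 <= K).
  { destruct (Rle_or_lt K0 K) as [|HKK0]; [assumption|exfalso].
    assert (Hyx0 : forall j, (j < n)%nat -> y j = x0 j).
    { apply eq_of_rsum_eq_of_comparable; [rewrite Hsum0; apply Wy|left].
      intros j Hj.
      apply (cost_level_flow_le n a b Ha (upd t i s) (fun _ => 0) y x0 K K0 j Hj).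
      - unfold upd; destruct (Nat.eqb j i); [lra|pose proof (Hbounds j Hj); lra].
      - apply HK, Hj.
      - left; split; [apply Hpos0, Hj|apply HK0, Hj]. }
    pose proof (Hyx0 i Hi); lra. }
  lra.
Qed.

Lemma capped_system_exists : exists t x, capped_system n a b c t x.
Proof.
  destruct untolled_equilibrium as [x0 [K0 [Hsum0 [Hpos0 HK0]]]].
  set (al := toll_slope n a).
  assert (Hal : forall j, (j < n)%nat -> 0 < al j).
  { intros j Hj; pose proof (toll_slope_gt j Hj); pose proof (Ha j Hj); unfold al; lra. }
  assert (Hbj : forall j, (j < n)%nat -> b j < K0).
  { intros j Hj; pose proof (HK0 j Hj); pose proof (Ha j Hj); pose proof (Hpos0 j Hj); nra. }
  set (F := fun j K => capped_cost_inv (a j) (al j) c (K - b j)).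
  assert (HF0 : forall j K, (j < n)%nat -> K0 <= K -> 0 < F j K).
  { intros j K Hj HK; pose proof (Ha j Hj); pose proof (Hal j Hj); pose proof (Hbj j Hj).
    eapply Rlt_le_trans; [|apply Rmax_l]; apply Rdiv_lt_0_compat; lra. }
  assert (H0n : (0 < n)%nat) by lia.
  pose proof (Ha 0%nat H0n); pose proof (Hal 0%nat H0n); pose proof (Hbj 0%nat H0n).
  destruct (rsum_level_exists n F K0 (K0 + a 0%nat + al 0%nat)) as [K [[HK0K _] HF]].
  - intros j; unfold F, capped_cost_inv; apply continuity_Rmax; reg.
  - lra.
  - rewrite <- Hsum0; apply rsum_le; intros j Hj; unfold F.
    pose proof (Ha j Hj); pose proof (Hal j Hj); pose proof (Hpos0 j Hj); pose proof (HK0 j Hj).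
    apply capped_cost_inv_le; [assumption|assumption|].
    unfold capped_cost; assert (0 <= Rmin (al j * x0 j) c) by (apply Rmin_glb; nra); lra.
  - eapply Rle_trans; [|apply (rsum_ge_term n _ 0%nat H0n)].
    + unfold F, capped_cost_inv; eapply Rle_trans; [|apply Rmax_l].
      apply (Rmult_le_reg_r (a 0%nat + al 0%nat)); [lra|]; field_simplify; lra.
    + intros j Hj; left; apply HF0; [exact Hj|lra].
  - exists (fun j => Rmin (al j * F j K) c), (fun j => F j K).
    split; [exists K|split; [exact HF|split; [intros; reflexivity|]]].
    + intros j Hj; pose proof (Ha j Hj); pose proof (Hal j Hj).
      pose proof (capped_cost_inv_spec (a j) (al j) c (K - b j) ltac:(assumption) ltac:(assumption)).
      unfold capped_cost in *; fold (F j K) in *; lra.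
    + intros j Hj; apply HF0; assumption.
Qed.

Lemma capped_system_inT t x : capped_system n a b c t x -> inT n a b c t.
Proof.
  intros C; pose proof C as [[K HK] [Hsum [Ht Hpos]]].
  assert (W : wardrop n a b t x)
    by (apply (wardrop_of_equal_costs n a b t x K); [intros j Hj; left|..]; auto).
  split.
  - intros i Hi; pose proof (toll_slope_gt i Hi); pose proof (Ha i Hi); pose proof (Hpos i Hi).
    rewrite (Ht i Hi); split; [|apply Rmin_r].
    apply Rmin_glb; [|exact Hc]; unfold toll_slope in *; nra.
  - intros i Hi s Hs x1 x' W1 W'.
    rewrite <- (wardrop_unique n a b Ha t x x1 W W1 i Hi).
    exact (capped_toll_no_profitable_deviation t x K Hpos Hsum HK i s x' Hi (Ht i Hi) Hs W').
Qed.

Lemma inT_capped_system t : inT n a b c t -> exists x, capped_system n a b c t x.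
Proof.
  intros HT.
  destruct (wardrop_exists n a b Ha t ltac:(lia)) as [x W].
  pose proof (inT_flow_pos t x HT W) as Hpos.
  destruct (equal_costs_of_wardrop n a b t x W Hpos) as [K HK].
  exists x; split; [exists K; exact HK|split; [apply W|split; [|exact Hpos]]].
  intros i Hi; destruct HT as [Hbounds Hdev].
  apply (best_response_capped_toll t x K Hpos (proj1 (proj2 W)) HK i Hi (Hbounds i Hi)).
  intros s Hs y Wy; exact (Hdev i Hi s Hs x y W Wy).
Qed.

End CappedTolls.

Theorem mainTheorem6 (n : nat) (a b : nat -> R) (c : R)
  (Hn : (2 <= n)%nat)
  (Ha : forall i, (i < n)%nat -> 0 < a i)
  (Hb : forall i, (i < n)%nat -> 0 <= b i)
  (Hx0 : forall x0, wardrop n a b (fun _ => 0) x0 ->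
           forall i, (i < n)%nat -> 0 < x0 i)
  (Hc : 0 <= c) :
  (forall t x t' x',
     capped_system n a b c t x -> capped_system n a b c t' x' ->
     forall i, (i < n)%nat -> t i = t' i /\ x i = x' i) /\
  (exists t, inT n a b c t /\
     forall t', inT n a b c t' -> forall i, (i < n)%nat -> t' i = t i).
Proof.
  split; [exact (capped_system_unique n a b c Hn Ha)|].
  destruct (capped_system_exists n a b c Hn Ha Hc Hx0) as [t [x C]].
  exists t; split; [exact (capped_system_inT n a b c Hn Ha Hc t x C)|].
  intros t' Ht' i Hi.
  destruct (inT_capped_system n a b c Hn Ha Hc Hx0 t' Ht') as [x' C'].
  exact (proj1 (capped_system_unique n a b c Hn Ha t' x' t x C' C i Hi)).
Qed.
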